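(* Let $n_C,n_D\in\mathbb{N}$ and $\mathcal{S}=\{(s_C,s_D)\in\mathbb{N}_0^2: s_C\le n_C,\ s_D\le n_D\}$, enumerated as $\mathbf{s}_1,\dots,\mathbf{s}_{|\mathcal{S}|}$ with index map $\phi(\mathbf{s}_i)=i$. For $\boldsymbol\theta=(\theta_C,\theta_D)\in[0,1]^2$ let $\mathbb{P}_{\boldsymbol\theta}(\mathbf{S}=\mathbf{s})=\binom{n_C}{s_C}\theta_C^{s_C}(1-\theta_C)^{n_C-s_C}\binom{n_D}{s_D}\theta_D^{s_D}(1-\theta_D)^{n_D-s_D}$. Let $g_0$ be an increasing, differentiable function with $g_0(0)\in[0,1]$ and $g_0^{-1}(1)$ defined, and for $K\in\mathbb{N}$ let $0=\theta_1<\theta_2<\dots<\theta_K=g_0^{-1}(1)$. Let $d:\mathcal{S}\to\{0,1\}$ be a decision function, identified with the vector $\mathbf{d}\in\{0,1\}^{|\mathcal{S}|}$, $d_i=d(\mathbf{s}_i)$, satisfying Barnard's convexity condition: $d(\mathbf{s}-(1,0))\ge d(\mathbf{s})$ and $d(\mathbf{s}+(0,1))\ge d(\mathbf{s})$ for all $\mathbf{s}\in\mathcal{S}$ (whenever the shifted vector lies in $\mathcal{S}$). For $\theta\in[0,g_0^{-1}(1)]$ let $r_d(\theta)=\mathbb{P}_{(\theta,g_0(\theta))}(d(\mathbf{S})=1)$, and let $\mathbf{p}_{j,0}\in\mathbb{R}^{|\mathcal{S}|}$ have entries $p_{i,j,0}=\mathbb{P}_{(\theta_j,g_0(\theta_j))}(\mathbf{S}=\mathbf{s}_i)$,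 so that $r_d(\theta_j)=\mathbf{p}_{j,0}^\top\mathbf{d}$. Let $\mathbf{A}_C,\mathbf{A}_D$ be the $|\mathcal{S}|\times|\mathcal{S}|$ matrices whose $i$-th rows are $\mathbf{e}_i-\mathbf{e}_{\phi(\mathbf{s}_i+(1,0))}$ and $\mathbf{e}_i-\mathbf{e}_{\phi(\mathbf{s}_i-(0,1))}$ respectively, where $\mathbf{e}_i$ is the $i$-th standard unit vector and $\mathbf{e}_{\phi(\mathbf{s})}:=\mathbf{0}$ if $\mathbf{s}\notin\mathcal{S}$. For $j\in\{1,\dots,K-1\}$ define vectors $\mathbf{m}_{j,D},\mathbf{m}_{j,C}$ with entries (writing $\mathbf{s}_i=(s_C,s_D)$) $$m_{i,j,D}=n_D(\theta_{j+1}-\theta_j)\binom{n_C}{s_C}\binom{n_D-1}{s_D-1}\max_{\theta\in[\theta_j,\theta_{j+1}]} g_0'(\theta)\,\theta^{s_C}g_0(\theta)^{s_D-1}(1-\theta)^{n_C-s_C}(1-g_0(\theta))^{n_D-s_D},$$ $$m_{i,j,C}=n_C(\theta_{j+1}-\theta_j)\binom{n_C-1}{s_C}\binom{n_D}{s_D}\min_{\theta\in[\theta_j,\theta_{j+1}]} \theta^{s_C}g_0(\theta)^{s_D}(1-\theta)^{n_C-s_C-1}(1-g_0(\theta))^{n_D-s_D}.$$ Then for every $j\in\{1,\dots,K-1\}$ and every $\theta\in(\theta_j,\theta_{j+1})$, $$r_d(\theta)\le \mathbf{p}_{j,0}^\top\mathbf{d}+\max\bigl(0,\ (\mathbf{m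}_{j,D}^\top\mathbf{A}_D-\mathbf{m}_{j,C}^\top\mathbf{A}_C)\mathbf{d}\bigr).$$
   Context: Conventions: $\binom{a}{b}=0$ if $b<0$ or $b>a$, and any entry whose binomial coefficient factor is $0$ is taken to be $0$ (regardless of negative exponents in the accompanying function). The setting is the one-sided two-sample binomial test of $H_0:\theta_D\le g_0(\theta_C)$, with $r_d$ the rejection rate of $d$ along the boundary $\{(\theta,g_0(\theta))\}$ of the null parameter set. *)

From HB Require Import structures.
From mathcomp Require Import all_boot all_order all_algebra.
From mathcomp Require Import all_classical all_reals all_analysis.
Set Implicit Arguments. Unset Strict Implicit. Unset Printing Implicit Defensive.
Import Order.TTheory GRing.Theory Num.Theory.
Local Open Scope ring_scope.

(* Sample space S = {(s_C,s_D) : s_C <= n_C, s_D <= n_D}, used directly as the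
   finite index type of all |S|-vectors and |S|x|S|-matrices (the enumeration
   phi is then immaterial). *)
Notation Sidx nC nD := ('I_nC.+1 * 'I_nD.+1)%type.

Section Defs.
Variable R : realType.

Definition bR (b : bool) : R := (nat_of_bool b)%:R.

Definition binom_pmf (n : nat) (th : R) (k : nat) : R :=
  'C(n, k)%:R * th ^+ k * (1 - th) ^+ (n - k)%N.

Definition prob (nC nD : nat) (thC thD : R) (s : Sidx nC nD) : R :=
  binom_pmf nC thC s.1 * binom_pmf nD thD s.2.

Definition rej_rate (nC nD : nat) (g0 : R -> R) (d : Sidx nC nD -> bool) (th : R) : R :=
  \sum_(s : Sidx nC nD) bR (d s) * prob (th) (g0 th) s.

Definition p0 (nC nD : nat) (g0 : R -> R) (theta : nat -> R) (j : nat)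
  (s : Sidx nC nD) : R := prob (theta j) (g0 (theta j)) s.

(* A_C : row s is e_s - e_{phi(s+(1,0))}  (second term 0 if s+(1,0) notin S) *)
Definition A_C (nC nD : nat) (s t : Sidx nC nD) : R :=
  bR (s == t) - bR ((nat_of_ord t.1 == (nat_of_ord s.1).+1) && (nat_of_ord t.2 == nat_of_ord s.2)).

(* A_D : row s is e_s - e_{phi(s-(0,1))}  (second term 0 if s-(0,1) notin S) *)
Definition A_D (nC nD : nat) (s t : Sidx nC nD) : R :=
  bR (s == t) - bR ((nat_of_ord t.1 == nat_of_ord s.1) && ((nat_of_ord t.2).+1 == nat_of_ord s.2)).

Definition vecmat (nC nD : nat) (m : Sidx nC nD -> R) (A : Sidx nC nD -> Sidx nC nD -> R)
  (t : Sidx nC nD) : R := \sum_(s : Sidx nC nD) m s * A s t.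

Definition dotd (nC nD : nat) (v : Sidx nC nD -> R) (d : Sidx nC nD -> bool) : R :=
  \sum_(t : Sidx nC nD) v t * bR (d t).

(* the function maximised in m_{i,j,D} (only used when s_D >= 1) *)
Definition fD (nC nD : nat) (g0 g0' : R -> R) (s : Sidx nC nD) (t : R) : R :=
  g0' t * t ^+ s.1 * g0 t ^+ (s.2 - 1)%N * (1 - t) ^+ (nC - s.1)%N
    * (1 - g0 t) ^+ (nD - s.2)%N.

(* the function minimised in m_{i,j,C} (only used when s_C <= n_C - 1) *)
Definition fC (nC nD : nat) (g0 : R -> R) (s : Sidx nC nD) (t : R) : R :=
  t ^+ s.1 * g0 t ^+ s.2 * (1 - t) ^+ (nC - s.1 - 1)%N * (1 - g0 t) ^+ (nD - s.2)%N.

Definition is_max_on (f : R -> R) (a b M : R) : Prop :=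
  (exists2 x, a <= x <= b & f x = M) /\ (forall x, a <= x <= b -> f x <= M).
Definition is_min_on (f : R -> R) (a b M : R) : Prop :=
  (exists2 x, a <= x <= b & f x = M) /\ (forall x, a <= x <= b -> M <= f x).

(* m_{j,D}; MD s j stands for max_{[theta_j,theta_{j+1}]} fD s.
   Entry is 0 when s_D = 0 (binomial C(n_D-1,-1) = 0). *)
Definition mD (nC nD : nat) (theta : nat -> R) (MD : Sidx nC nD -> nat -> R)
  (j : nat) (s : Sidx nC nD) : R :=
  if (nat_of_ord s.2 == 0)%N then 0 else
  nD%:R * (theta j.+1 - theta j) * 'C(nC, s.1)%:R * 'C(nD.-1, (s.2).-1)%:R * MD s j.

(* m_{j,C}; MC s j stands for min_{[theta_j,theta_{j+1}]} fC s.
   Entry is 0 when s_C = n_C (binomial C(n_C-1,n_C) = 0). *)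
Definition mC (nC nD : nat) (theta : nat -> R) (MC : Sidx nC nD -> nat -> R)
  (j : nat) (s : Sidx nC nD) : R :=
  if (nC <= nat_of_ord s.1)%N then 0 else
  nC%:R * (theta j.+1 - theta j) * 'C(nC.-1, s.1)%:R * 'C(nD, s.2)%:R * MC s j.

End Defs.

From HB Require Import structures.
From mathcomp Require Import all_boot all_order all_algebra.
From mathcomp Require Import all_classical all_reals all_analysis.
From mathcomp Require Import ring lra zify.
Import Order.TTheory GRing.Theory Num.Theory.
Local Open Scope ring_scope.
Set Implicit Arguments. Unset Strict Implicit. Unset Printing Implicit Defensive.

(* Differentiating and summing by
   parts in each coordinate expresses r_d' as the increments of d in s_D,
   weighted by the integrand of m_{j,D}, minus the decrements of d in s_C,
   weighted by the integrand of m_{j,C}.  Barnard's condition makes all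
   these differences nonnegative, so replacing the weights by their max (resp.
   min) on [theta_j, theta_{j+1}] bounds r_d' on the cell by
   c = (m_{j,D}^T A_D - m_{j,C}^T A_C) d / (theta_{j+1} - theta_j).  The mean
   value theorem then gives
     r_d(theta) <= r_d(theta_j) + c (theta - theta_j)
                <= p_{j,0}^T d + max(0, c (theta_{j+1} - theta_j)). *)

Section BinomialPmf.
Variable R : realType.

Definition binom_pmf_deriv (n : nat) (x : R) (k : nat) : R :=
  n%:R * ((if k is k'.+1 then binom_pmf n.-1 x k' else 0) - binom_pmf n.-1 x k).

Lemma is_derive_binom_pmf n k (x : R) :
  is_derive x 1 (binom_pmf n ^~ k) (binom_pmf_deriv n x k).
Proof.
have hder := is_deriveM
  (is_deriveM (is_derive_cst ('C(n, k)%:R : R) x 1) (is_deriveX k (is_derive_id x 1)))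
  (is_deriveX (n - k) (is_deriveB (is_derive_cst (1 : R) x 1) (is_derive_id x 1))).
have -> : binom_pmf n ^~ k =
    (cst ('C(n, k)%:R : R) * @id R ^+ k) * ((cst 1 - @id R) ^+ (n - k)).
  by apply/funext => y; rewrite !fctE.
apply: is_derive_eq hder _; rewrite !fctE /binom_pmf_deriv /binom_pmf /=.
rewrite -![_ *: _]/(_ * _).
case: k => [|k].
  by rewrite !subn0 !bin0 !expr0; case: n => [|n] /=; ring.
have -> : (n.-1 - k = n - k.+1)%N by lia.
have -> : ((n - k.+1).-1 = n.-1 - k.+1)%N by lia.
have diag : n%:R * 'C(n.-1, k)%:R = k.+1%:R * 'C(n, k.+1)%:R :> R.
  by rewrite -!natrM mul_bin_diag.
have down : n%:R * 'C(n.-1, k.+1)%:R = (n - k.+1)%:R * 'C(n, k.+1)%:R :> R.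
  by rewrite -!natrM mul_bin_down.
by rewrite /= [in RHS]mulrBr ![in RHS]mulrA diag down; ring.
Qed.

Lemma sum_binom_pmf_deriv n (D : nat -> R) (x : R) :
  \sum_(k < n.+1) D k * binom_pmf_deriv n x k
  = n%:R * \sum_(k < n) binom_pmf n.-1 x k * (D k.+1 - D k).
Proof.
case: n => [|m].
  by rewrite big_ord0 mulr0 big1 // => k _; rewrite /binom_pmf_deriv !mul0r mulr0.
rewrite /binom_pmf_deriv.
under eq_bigr => k _ do rewrite mulrCA mulrBr.
rewrite -mulr_sumr sumrB; congr (_ * _).
rewrite big_ord_recl [X in _ - X]big_ord_recr /= mulr0 add0r.
rewrite [binom_pmf m x m.+1]/binom_pmf bin_small // !mul0r mulr0 addr0 -sumrB.
by apply: eq_bigr => k _; rewrite /bump /=; ring.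
Qed.

End BinomialPmf.

Lemma ler_derive_slope (R : realType) (f f' : R -> R) (a t c : R) : a < t ->
  (forall x, a <= x <= t -> is_derive x 1 f (f' x)) ->
  (forall x, a < x < t -> f' x <= c) ->
  f t <= f a + c * (t - a).
Proof.
move=> lt_at f_der f'_le.
have [x /[!in_itv] /= x_in mvt] : exists2 x, x \in `]a, t[ & f t - f a = f' x * (t - a).
  apply: MVT => // [x /[!in_itv] /= /andP[ax xt]|].
    by apply: f_der; rewrite !ltW.
  apply: derivable_within_continuous => x /[!in_itv] /= x_in.
  exact: @ex_derive _ _ _ _ _ _ _ (f_der x x_in).
rewrite -lerBlDl mvt; apply: ler_wpM2r; first by rewrite subr_ge0 ltW.
exact: f'_le.
Qed.

Lemma le_incr_grid (R : realType) (theta : nat -> R) (K i k : nat) :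
  (forall j, (1 <= j < K)%N -> theta j < theta j.+1) ->
  (1 <= i <= k)%N -> (k <= K)%N -> theta i <= theta k.
Proof.
move=> incr /andP[i1 ik] kK.
apply: (@homo_leq_in R [pred j | 1 <= j <= K]%N theta (fun x y => x <= y)) => //.
- by move=> y x z; exact: le_trans.
- by move=> a b /andP[a1 _] /andP[_ bK] c /andP[ac cb]; rewrite inE; lia.
- by move=> j /andP[j1 _] /andP[_ jK]; apply/ltW/incr/andP.
- by rewrite inE; lia.
- by rewrite inE; lia.
Qed.

Section Integrands.
Variables (R : realType) (nC nD : nat) (g0 g0' : R -> R).

Lemma fD_binom_pmf (i : 'I_nC.+1) (k : 'I_nD) (x : R) :
  binom_pmf nC x i * g0' x * (nD%:R * binom_pmf nD.-1 (g0 x) k)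
  = nD%:R * 'C(nC, i)%:R * 'C(nD.-1, k)%:R * fD g0 g0' (i, lift ord0 k) x.
Proof.
rewrite /fD /binom_pmf /= /bump leq0n add1n subn1 /=.
have -> : (nD - k.+1 = nD.-1 - k)%N by lia.
ring.
Qed.

Lemma fC_binom_pmf (i : 'I_nC) (k : 'I_nD.+1) (x : R) :
  nC%:R * binom_pmf nC.-1 x i * binom_pmf nD (g0 x) k
  = nC%:R * 'C(nC.-1, i)%:R * 'C(nD, k)%:R * fC g0 (widen_ord (leqnSn nC) i, k) x.
Proof.
rewrite /fC /binom_pmf /=.
have -> : (nC - i - 1 = nC.-1 - i)%N by lia.
ring.
Qed.

End Integrands.

Lemma bR_mull (R : realType) (b : bool) (x : R) : bR R b * x = if b then x else 0.
Proof. by case: b; rewrite /bR /= ?mul1r ?mul0r. Qed.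

Lemma bR_le (R : realType) (b1 b2 : bool) : (b1 -> b2) -> bR R b1 <= bR R b2.
Proof. by case: b1; case: b2 => // /(_ isT). Qed.

Section DecisionFunction.
Variables (R : realType) (nC nD : nat) (d : Sidx nC nD -> bool).

Definition dnat (i k : nat) : R :=
  if (i <= nC)%N && (k <= nD)%N then bR R (d (inord i, inord k)) else 0.

Lemma dnat_ord (i : 'I_nC.+1) (k : 'I_nD.+1) : dnat i k = bR R (d (i, k)).
Proof. by rewrite /dnat -ltnS ltn_ord -ltnS ltn_ord /= !inord_val. Qed.

Lemma sum_Sidx (F : Sidx nC nD -> R) :
  \sum_s F s = \sum_(i < nC.+1) \sum_(k < nD.+1) F (i, k).
Proof. by rewrite pair_bigA; apply: eq_bigr => -[]. Qed.

Lemma rej_rateE (g0 : R -> R) (x : R) : rej_rate g0 d x =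
  \sum_(i < nC.+1) \sum_(k < nD.+1) dnat i k * (binom_pmf nC x i * binom_pmf nD (g0 x) k).
Proof.
by rewrite /rej_rate sum_Sidx; apply: eq_bigr => i _; apply: eq_bigr => k _; rewrite dnat_ord.
Qed.

Lemma dotd_p0 (g0 : R -> R) (theta : nat -> R) (j : nat) :
  dotd (p0 g0 theta j) d = rej_rate g0 d (theta j).
Proof. by apply: eq_bigr => s _; rewrite mulrC. Qed.

Lemma dotd_vecmat (m : Sidx nC nD -> R) (A : Sidx nC nD -> Sidx nC nD -> R) :
  dotd (vecmat m A) d = \sum_s m s * \sum_t A s t * bR R (d t).
Proof.
rewrite /dotd /vecmat; under eq_bigr => t _ do rewrite mulr_suml.
rewrite exchange_big; apply: eq_bigr => s _; rewrite mulr_sumr.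
by apply: eq_bigr => t _; rewrite mulrA.
Qed.

Lemma A_D_mulr (s : Sidx nC nD) : \sum_t A_D R s t * bR R (d t)
  = dnat s.1 s.2 - (if nat_of_ord s.2 is k.+1 then dnat s.1 k else 0).
Proof.
rewrite /A_D; under eq_bigr => t _ do rewrite mulrBl !bR_mull.
rewrite sumrB -!big_mkcond /= (big_pred1 s) => [|t]; last by rewrite eq_sym.
case: s => i k /=; rewrite -dnat_ord; congr (_ - _).
case: k => -[|k] lt_kD /=.
  by rewrite big_pred0 // => t; rewrite andbF.
have lt_k : (k < nD.+1)%N by apply: ltnW.
by rewrite (big_pred1 (i, Ordinal lt_k)) -?dnat_ord.
Qed.

Lemma A_C_mulr (s : Sidx nC nD) :
  \sum_t A_C R s t * bR R (d t) = dnat s.1 s.2 - dnat s.1.+1 s.2.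
Proof.
rewrite /A_C; under eq_bigr => t _ do rewrite mulrBl !bR_mull.
rewrite sumrB -!big_mkcond /= (big_pred1 s) => [|t]; last by rewrite eq_sym.
case: s => i k /=; rewrite -dnat_ord; congr (_ - _).
case: (ltnP i nC) => [lt_iC|le_Ci].
  by rewrite (big_pred1 (Ordinal (lt_iC : (i.+1 < nC.+1)%N), k)) -?dnat_ord.
rewrite /dnat ltnNge le_Ci /= big_pred0 // => -[a b] /=.
by apply/negbTE; rewrite negb_and; move: (ltn_ord a); case: eqP => //= ->; lia.
Qed.

Lemma dotdB (u v : Sidx nC nD -> R) :
  dotd (fun t => u t - v t) d = dotd u d - dotd v d.
Proof. by rewrite /dotd -sumrB; apply: eq_bigr => t _; rewrite mulrBl. Qed.

(* slopeD w - slopeC w is r_d' at x for w = fD, fC at x, and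
   m^T A d / (theta_{j+1} - theta_j) for w = MD, MC at j. *)
Definition slopeD (w : Sidx nC nD -> R) : R :=
  \sum_(i < nC.+1) \sum_(k < nD) nD%:R * 'C(nC, i)%:R * 'C(nD.-1, k)%:R
    * w (i, lift ord0 k) * (dnat i k.+1 - dnat i k).

Definition slopeC (w : Sidx nC nD -> R) : R :=
  \sum_(i < nC) \sum_(k < nD.+1) nC%:R * 'C(nC.-1, i)%:R * 'C(nD, k)%:R
    * w (widen_ord (leqnSn nC) i, k) * (dnat i k - dnat i.+1 k).

Lemma dotd_mA (theta : nat -> R) (MD MC : Sidx nC nD -> nat -> R) (j : nat) :
  dotd (fun t => vecmat (mD theta MD j) (@A_D R nC nD) t
                 - vecmat (mC theta MC j) (@A_C R nC nD) t) d
  = (theta j.+1 - theta j) * (slopeD (MD ^~ j) - slopeC (MC ^~ j)).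
Proof.
rewrite dotdB !dotd_vecmat mulrBr; congr (_ - _).
  under eq_bigr => s _ do rewrite A_D_mulr.
  rewrite sum_Sidx /slopeD mulr_sumr; apply: eq_bigr => i _.
  rewrite big_ord_recl {1}/mD /= mul0r add0r mulr_sumr.
  by apply: eq_bigr => k _; rewrite /mD /= /bump leq0n add1n; ring.
under eq_bigr => s _ do rewrite A_C_mulr.
rewrite sum_Sidx /slopeC big_ord_recr /= [X in _ + X]big1 ?addr0 => [|k _]; last first.
  by rewrite /mC /= leqnn mul0r.
rewrite mulr_sumr; apply: eq_bigr => i _; rewrite mulr_sumr; apply: eq_bigr => k _.
by rewrite /mC /= leqNgt ltn_ord /=; ring.
Qed.

Section Derivative.
Variables (g0 g0' : R -> R) (x : R).

Lemma rej_rate_derivE :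
  \sum_(i < nC.+1) \sum_(k < nD.+1) dnat i k *
    (binom_pmf_deriv nC x i * binom_pmf nD (g0 x) k
     + binom_pmf nC x i * (binom_pmf_deriv nD (g0 x) k * g0' x))
  = slopeD (fD g0 g0' ^~ x) - slopeC (fC g0 ^~ x).
Proof.
under eq_bigr => i _ do under eq_bigr => k _ do rewrite mulrDr.
under eq_bigr => i _ do rewrite big_split.
rewrite big_split /= addrC; congr (_ + _).
  rewrite /slopeD; apply: eq_bigr => i _.
  transitivity (binom_pmf nC x i * g0' x *
                \sum_(k < nD.+1) dnat i k * binom_pmf_deriv nD (g0 x) k).
    by rewrite mulr_sumr; apply: eq_bigr => k _; ring.
  rewrite sum_binom_pmf_deriv mulrA mulr_sumr; apply: eq_bigr => k _.
  by rewrite -fD_binom_pmf; ring.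
rewrite exchange_big /slopeC [X in - X]exchange_big -sumrN /=; apply: eq_bigr => k _.
transitivity (binom_pmf nD (g0 x) k *
              \sum_(i < nC.+1) dnat i k * binom_pmf_deriv nC x i).
  by rewrite mulr_sumr; apply: eq_bigr => i _; ring.
rewrite (sum_binom_pmf_deriv _ (dnat ^~ k)) mulrCA !mulr_sumr -sumrN.
apply: eq_bigr => i _.
rewrite -fC_binom_pmf; ring.
Qed.

Lemma is_derive_rej_rate : is_derive x 1 g0 (g0' x) ->
  is_derive x 1 (rej_rate g0 d) (slopeD (fD g0 g0' ^~ x) - slopeC (fC g0 ^~ x)).
Proof.
move=> g0_der; rewrite -rej_rate_derivE.
have -> : rej_rate g0 d = \sum_(i < nC.+1) \sum_(k < nD.+1)
    (fun t => dnat i k * (binom_pmf nC t i * binom_pmf nD (g0 t) k)).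
  by apply/funext => t; rewrite rej_rateE fct_sumE; apply: eq_bigr => i _; rewrite fct_sumE.
apply: is_derive_sum => i; apply: is_derive_sum => k.
have -> : (fun t => dnat i k * (binom_pmf nC t i * binom_pmf nD (g0 t) k))
    = dnat i k \*: (binom_pmf nC ^~ i * (binom_pmf nD ^~ k \o g0)) by [].
apply: is_derive_eq (is_deriveZ _ (is_deriveM (is_derive_binom_pmf nC i x)
  (is_derive1_comp (is_derive_binom_pmf nD k (g0 x)) g0_der))) _.
by rewrite -![_ *: _]/(_ * _) /=; ring.
Qed.

End Derivative.

Section Barnard.
Hypothesis barnardC : forall s t : Sidx nC nD,
  (nat_of_ord t.1).+1 = nat_of_ord s.1 -> nat_of_ord t.2 = nat_of_ord s.2 -> d s -> d t.
Hypothesis barnardD : forall s t : Sidx nC nD,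
  nat_of_ord t.1 = nat_of_ord s.1 -> nat_of_ord t.2 = (nat_of_ord s.2).+1 -> d s -> d t.

Lemma dnat_incr (i : 'I_nC.+1) (k : 'I_nD) : dnat i k <= dnat i k.+1.
Proof.
have le_iC : (i <= nC)%N by rewrite -ltnS.
have le_kD : (k <= nD)%N := ltnW (ltn_ord k).
rewrite /dnat le_iC le_kD ltn_ord; apply/bR_le/barnardD => //=.
by rewrite !inordK // ltnS.
Qed.

Lemma dnat_decr (i : 'I_nC) (k : 'I_nD.+1) : dnat i.+1 k <= dnat i k.
Proof.
have le_kD : (k <= nD)%N by rewrite -ltnS.
have le_iC : (i <= nC)%N := ltnW (ltn_ord i).
rewrite /dnat le_kD le_iC ltn_ord; apply/bR_le/barnardC => //=.
by rewrite !inordK // ltnS.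
Qed.

Lemma ler_slopeD (w1 w2 : Sidx nC nD -> R) :
  (forall s : Sidx nC nD, (0 < s.2)%N -> w1 s <= w2 s) -> slopeD w1 <= slopeD w2.
Proof.
move=> le_w; apply: ler_sum => i _; apply: ler_sum => k _.
by rewrite ler_wpM2r ?subr_ge0 ?dnat_incr // ler_wpM2l ?le_w.
Qed.

Lemma ler_slopeC (w1 w2 : Sidx nC nD -> R) :
  (forall s : Sidx nC nD, (s.1 < nC)%N -> w1 s <= w2 s) -> slopeC w1 <= slopeC w2.
Proof.
move=> le_w; apply: ler_sum => i _; apply: ler_sum => k _.
by rewrite ler_wpM2r ?subr_ge0 ?dnat_decr // ler_wpM2l ?le_w /=.
Qed.

End Barnard.
End DecisionFunction.

Unset Implicit Arguments. Set Strict Implicit.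

Theorem theorem2 (R : realType) (nC nD : nat) (g0 g0' : R -> R) (t1 : R)
  (K : nat) (theta : nat -> R) (d : Sidx nC nD -> bool)
  (MD MC : Sidx nC nD -> nat -> R) :
  (0 < nC)%N -> (0 < nD)%N ->
  (* g0 increasing, differentiable with derivative g0', g0(0) in [0,1],
     t1 = g0^{-1}(1) *)
  0 <= t1 <= 1 ->
  (forall x y : R, 0 <= x -> x < y -> y <= t1 -> g0 x < g0 y) ->
  (forall x : R, 0 <= x <= t1 -> is_derive x 1 g0 (g0' x)) ->
  0 <= g0 0 <= 1 -> g0 t1 = 1 ->
  (* grid 0 = theta_1 < ... < theta_K = g0^{-1}(1) *)
  theta 1%N = 0 -> theta K = t1 ->
  (forall j : nat, (1 <= j < K)%N -> theta j < theta j.+1) ->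
  (* Barnard's convexity condition *)
  (forall s t : Sidx nC nD, ((nat_of_ord t.1).+1 = nat_of_ord s.1) -> (nat_of_ord t.2 = nat_of_ord s.2) ->
      d s -> d t) ->
  (forall s t : Sidx nC nD, (nat_of_ord t.1 = nat_of_ord s.1) -> (nat_of_ord t.2 = (nat_of_ord s.2).+1) ->
      d s -> d t) ->
  (* MD, MC are the max / min appearing in m_{j,D}, m_{j,C} *)
  (forall (j : nat) (s : Sidx nC nD), (1 <= j < K)%N -> (0 < s.2)%N ->
      is_max_on (fD g0 g0' s) (theta j) (theta j.+1) (MD s j)) ->
  (forall (j : nat) (s : Sidx nC nD), (1 <= j < K)%N -> (s.1 < nC)%N ->
      is_min_on (fC g0 s) (theta j) (theta j.+1) (MC s j)) ->
  forall (j : nat), (1 <= j < K)%N ->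
  forall th : R, theta j < th < theta j.+1 ->
    rej_rate g0 d th <=
      dotd (p0 g0 theta j) d
      + Num.max 0 (dotd (fun t => vecmat (mD theta MD j) (@A_D R nC nD) t
                                  - vecmat (mC theta MC j) (@A_C R nC nD) t) d).
Proof.
move=> _ _ _ _ g0_der _ _ theta1 thetaK theta_incr barnardC barnardD MD_max MC_min
  j jK th /andP[lt_j_th lt_th_j1].
have [j_ge1 lt_jK] := andP jK.
have theta_j_ge0 : 0 <= theta j.
  by rewrite -theta1; apply: le_incr_grid theta_incr _ _; lia.
have theta_j1_le : theta j.+1 <= t1.
  by rewrite -thetaK; apply: le_incr_grid theta_incr _ _; lia.
have in_cell x : theta j <= x <= th -> theta j <= x <= theta j.+1.
  by case/andP=> -> /le_trans; apply; rewrite ltW.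
have rej_der x : theta j <= x <= th ->
    is_derive x 1 (rej_rate g0 d) (slopeD d (fD g0 g0' ^~ x) - slopeC d (fC g0 ^~ x)).
  move=> /in_cell /andP[jx xj1]; apply/is_derive_rej_rate/g0_der.
  by rewrite (le_trans theta_j_ge0 jx) (le_trans xj1 theta_j1_le).
have slope_le x : theta j < x < th ->
    slopeD d (fD g0 g0' ^~ x) - slopeC d (fC g0 ^~ x)
    <= slopeD d (MD ^~ j) - slopeC d (MC ^~ j).
  move=> /andP[/ltW jx /ltW xth].
  have x_in : theta j <= x <= theta j.+1 by apply: in_cell; rewrite jx xth.
  apply: lerB; [apply: ler_slopeD | apply: ler_slopeC] => // s s_in.
  - exact: (MD_max j s jK s_in).2.
  - exact: (MC_min j s jK s_in).2.
rewrite dotd_p0 dotd_mA.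
apply: le_trans (ler_derive_slope lt_j_th rej_der slope_le) _.
set c := slopeD d (MD ^~ j) - slopeC d (MC ^~ j).
rewrite lerD2l le_max; apply/orP; case: (lerP 0 c) => c_sign; [right | left]; nra.
Qed.
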